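(* Let $N\ge 1$ and let $M=\prod_{i=1}^{N}M_i\subset\mathbb{R}^N$ be compact, with each $M_i\subset\mathbb{R}$. Let $U=\prod_{i=1}^{N}U_i\subset\mathbb{C}^N$, where each $U_i$ is an open domain of $\mathbb{C}$ symmetric about the real axis with $M_i\subset U_i$, and let $\partial\bar U:=\prod_{i=1}^N\partial \bar U_i$. Then the Cauchy kernel functions are dense in $\mathcal{F}_M$: every continuous function $f:M\to\mathbb{R}$ is a uniform limit on $M$ of finite linear combinations $\sum_{k=1}^m\theta_k K(\boldsymbol{\xi}_k,\cdot)$ with $m\ge1$, $\theta_k\in\mathbb{C}$ and $\boldsymbol{\xi}_k\in\partial\bar U$.
   Context: $\mathcal{F}_M$ denotes the space of continuous functions $M\to\mathbb{R}$. For $\boldsymbol{\xi}=(\xi^1,\dots,\xi^N)\in\partial\bar U$ and $\mathbf{x}=(x_1,\dots,x_N)\in M$, the Cauchy kernel is $K(\boldsymbol{\xi},\mathbf{x}):=\prod_{i=1}^{N}\frac{1}{\xi^i-x_i}$. *)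

From HB Require Import structures.
From mathcomp Require Import all_boot all_order all_algebra.
From mathcomp Require Import all_classical all_reals all_analysis.
From mathcomp Require Import complex.
Set Implicit Arguments. Unset Strict Implicit. Unset Printing Implicit Defensive.
Import Order.TTheory GRing.Theory Num.Theory.
Import numFieldTopology.Exports numFieldNormedType.Exports.
Local Open Scope classical_set_scope.
Local Open Scope ring_scope.

(* The complex numbers R[i] over a real closed field R, seen as a
   numClosedFieldType, so that they carry the standard metric topology
   induced by the modulus. *)
Definition Cx (R : rcfType) : numClosedFieldType := R[i].

Definition RtoC (R : rcfType) (x : R) : Cx R := real_complex R x.

Definition conjC (R : rcfType) (z : Cx R) : Cx R := conjc (z : R[i]).

Definition boundary (T : topologicalType) (A : set T) : set T :=
  closure A `\` interior A.

(* Points of R^N are row vectors 'rV[R]_N; x_i is x ord0 i.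
   The Cauchy kernel K(xi, x) = prod_{i=1}^N 1/(xi^i - x_i). *)
Definition cauchy_kernel (R : rcfType) (N : nat) (xi : 'I_N -> Cx R)
    (x : 'rV[R]_N) : Cx R :=
  \prod_(i < N) (xi i - RtoC (x ord0 i))^-1.

From HB Require Import structures.
From mathcomp Require Import all_boot all_order all_algebra.
From mathcomp Require Import all_classical all_reals all_analysis.
From mathcomp Require Import complex.
From mathcomp.algebra_tactics Require Import ring lra.
Import Order.TTheory GRing.Theory Num.Theory.
Import numFieldTopology.Exports numFieldNormedType.Exports.
Local Open Scope classical_set_scope.
Local Open Scope ring_scope.
Set Implicit Arguments. Unset Strict Implicit. Unset Printing Implicit Defensive.

(* Let A be the set of real functions on K = M_1 x ... x M_N
   that are continuous, bounded, and uniform limits on K of complex combinations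
   of kernels K(xi, .) with poles xi in the product of the boundaries.  A is a
   uniformly closed algebra.  For products, the partial fraction identity
   1/((a-x)(b-x)) = (1/(a-x) - 1/(b-x))/(b-a), applied in each variable, writes
   K(xi, .) K(eta, .) as a combination of kernels when all xi_i <> eta_i; equal
   poles are first moved apart along the boundary, which has no isolated points,
   at a uniformly small cost since the poles stay away from the compact M_i.
   By the symmetry of U_i, Re (a K(xi, .)) = (a K(xi, .) + conj a K(conj xi, .))/2
   belongs to A, and these functions separate the points of K and vanish
   nowhere.  The Stone-Weierstrass theorem for algebras without constants then
   gives A = C(K). *)

Section ComplexNorm.
Variable R : realType.
Local Notation C := (Cx R).

(* The modulus as an element of [R], so that estimates can be closed by [lra]. *)
Definition cnorm (z : C) : R := Normc.normc (z : R[i]).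

Lemma cnormE (z : C) : `|z| = RtoC (cnorm z).
Proof. by case: z. Qed.

Lemma ltr_RtoC (a b : R) : (RtoC a < RtoC b :> C) = (a < b).
Proof. exact: ltcR. Qed.

Lemma ler_RtoC (a b : R) : (RtoC a <= RtoC b :> C) = (a <= b).
Proof. exact: lecR. Qed.

Lemma RtoC_inj : injective (@RtoC R).
Proof. by move=> a b []. Qed.

Lemma RtoC0 : RtoC 0 = 0 :> C.
Proof. by rewrite /RtoC rmorph0. Qed.

Lemma RtoCD (a b : R) : RtoC (a + b) = RtoC a + RtoC b :> C.
Proof. by rewrite /RtoC rmorphD. Qed.

Lemma RtoCB (a b : R) : RtoC (a - b) = RtoC a - RtoC b :> C.
Proof. by rewrite /RtoC rmorphB. Qed.

Lemma RtoCM (a b : R) : RtoC (a * b) = RtoC a * RtoC b :> C.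
Proof. by rewrite /RtoC rmorphM. Qed.

Lemma cnorm_ge0 z : 0 <= cnorm z.
Proof. by rewrite -ler_RtoC -cnormE normr_ge0. Qed.

Lemma cnorm0 : cnorm 0 = 0.
Proof. by apply: RtoC_inj; rewrite -cnormE normr0. Qed.

Lemma cnorm_eq0 z : (cnorm z == 0) = (z == 0).
Proof.
apply/eqP/eqP => [h|->]; last exact: cnorm0.
by apply/eqP; rewrite -normr_eq0 cnormE h RtoC0.
Qed.

Lemma cnorm_gt0 z : (0 < cnorm z) = (z != 0).
Proof. by rewrite lt_def cnorm_ge0 andbT cnorm_eq0. Qed.

Lemma ler_cnormD a b : cnorm (a + b) <= cnorm a + cnorm b.
Proof. exact: le_normcD. Qed.

Lemma cnormN a : cnorm (- a) = cnorm a.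
Proof. exact: normcN. Qed.

Lemma cnorm_distC a b : cnorm (a - b) = cnorm (b - a).
Proof. by rewrite -cnormN opprB. Qed.

Lemma cnormM a b : cnorm (a * b) = cnorm a * cnorm b.
Proof. exact: Normc.normcM. Qed.

Lemma cnormV a : cnorm a^-1 = (cnorm a)^-1.
Proof. exact: Normc.normcV. Qed.

Lemma cnorm1 : cnorm 1 = 1.
Proof. exact: Normc.normc1. Qed.

Lemma cnorm_RtoC (a : R) : cnorm (RtoC a) = `|a|.
Proof. by rewrite /cnorm /RtoC /= expr0n /= addr0 sqrtr_sqr. Qed.

Lemma ler_Re_cnorm (z : C) : `|complex.Re (z : R[i])| <= cnorm z.
Proof.
case: z => a b; rewrite /cnorm /= -sqrtr_sqr; apply: ler_wsqrtr.
by rewrite lerDl sqr_ge0.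
Qed.

Lemma ler_Im_cnorm (z : C) : `|complex.Im (z : R[i])| <= cnorm z.
Proof.
case: z => a b; rewrite /cnorm /= -sqrtr_sqr; apply: ler_wsqrtr.
by rewrite lerDr sqr_ge0.
Qed.

Lemma cnorm_conj (z : C) : cnorm (conjC z) = cnorm z.
Proof. by case: z => a b; rewrite /cnorm /conjC /= sqrrN. Qed.

Lemma conjCxB (a b : C) : conjC (a - b) = conjC a - conjC b.
Proof. by rewrite /conjC rmorphB. Qed.

Lemma conjCxK (a : C) : conjC (conjC a) = a.
Proof. by rewrite /conjC conjcK. Qed.

Lemma conjCx_RtoC (a : R) : conjC (RtoC a) = RtoC a.
Proof. by rewrite /conjC /RtoC conjc_real. Qed.

Lemma RtoC_Re (z : C) : RtoC (complex.Re (z : R[i])) = (z + conjC z) / 2%:R.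
Proof. by rewrite /RtoC /conjC ReJ_add. Qed.

Lemma nbhs_cnormP (z : C) (A : set C) :
  nbhs z A <-> exists2 r : R, 0 < r & forall w, cnorm (z - w) < r -> A w.
Proof.
rewrite nbhs_ballP; split => [[e e0 sub]|[r r0 H]].
  case: e e0 sub => a b /=; rewrite ltcE /= => /andP[/eqP -> a0] sub.
  exists a => // w h; apply: sub.
  by rewrite -ball_normE /= cnormE -[Complex a 0]/(RtoC a) ltr_RtoC.
exists (RtoC r); first by rewrite /= -RtoC0 ltr_RtoC.
by move=> w; rewrite -ball_normE /= cnormE ltr_RtoC; apply: H.
Qed.

Lemma closure_cnormP (A : set C) z :
  closure A z <-> forall r : R, 0 < r -> exists2 w, A w & cnorm (z - w) < r.
Proof.
split => [h r r0|h B /nbhs_cnormP [r r0 H]].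
  have [|w [Aw hw]] := h (fun w => cnorm (z - w) < r); last by exists w.
  by apply/nbhs_cnormP; exists r.
by have [w Aw hw] := h r r0; exists w; split => //; apply: H.
Qed.

Lemma interior_cnormP (A : set C) z :
  interior A z <-> exists2 r : R, 0 < r & forall w, cnorm (z - w) < r -> A w.
Proof. exact: nbhs_cnormP. Qed.

Lemma RtoC_continuous : continuous (@RtoC R).
Proof.
move=> a A /nbhs_cnormP [r r0 H]; apply/nbhs_ballP; exists r => // b.
by rewrite -ball_normE /= => h; apply: H; rewrite -RtoCB cnorm_RtoC.
Qed.

Lemma Re_continuous : continuous (fun z : C => complex.Re (z : R[i])).
Proof.
move=> a A /nbhs_ballP [r r0 H]; apply/nbhs_cnormP; exists r => // b h.
apply: H; rewrite -ball_normE /=.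
by have := ler_Re_cnorm (a - b); rewrite raddfB /=; lra.
Qed.

End ComplexNorm.

Section Segments.
Variable R : realType.
Local Notation C := (Cx R).

Definition lerpC (u w : C) (s : R) : C := u + RtoC s * (w - u).

Lemma cnorm_lerpB (u w : C) (a b : R) :
  cnorm (lerpC u w a - lerpC u w b) = `|a - b| * cnorm (w - u).
Proof.
have -> : lerpC u w a - lerpC u w b = RtoC (a - b) * (w - u).
  by rewrite /lerpC RtoCB; ring.
by rewrite cnormM cnorm_RtoC.
Qed.

Lemma lerpC0 (u w : C) : lerpC u w 0 = u.
Proof. by rewrite /lerpC RtoC0 mul0r addr0. Qed.

Lemma lerpC1 (u w : C) : lerpC u w 1 = w.
Proof. by rewrite /lerpC /RtoC rmorph1 mul1r addrC subrK. Qed.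

(* The witness is the supremum of the [s] in [0, 1] with [F (lerpC u w s)]. *)
Lemma closed_lerpC_frontier (F : set C) u w : closed F -> F u -> ~ F w ->
  exists2 s : R, 0 <= s <= 1 & F (lerpC u w s) /\ ~ interior F (lerpC u w s).
Proof.
move=> cF Fu Fw.
pose S := [set s : R | 0 <= s <= 1 /\ F (lerpC u w s)].
have S0 : S 0 by split; [rewrite lexx ler01 | rewrite lerpC0].
have hS : has_sup S by split; [exists 0 | exists 1 => s [/andP[_ ?] _]].
set s0 := sup S.
have s0ge : 0 <= s0 := sup_upper_bound hS S0.
have s0le : s0 <= 1 by apply: ge_sup; [exists 0 | move=> s [/andP[_ ?] _]].
have d0 : 0 < cnorm (w - u).
  by rewrite cnorm_gt0 subr_eq0; apply/eqP => wu; apply: Fw; rewrite wu.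
have Fs0 : F (lerpC u w s0).
  rewrite (closure_id F).1 //; apply/closure_cnormP => r r0.
  have [s Ss hs] := sup_adherent (divr_gt0 r0 d0) hS.
  exists (lerpC u w s); first by case: Ss.
  rewrite cnorm_lerpB ger0_norm ?subr_ge0 ?(sup_upper_bound hS Ss) //.
  by rewrite -ltr_pdivlMr // ltrBlDr addrC -ltrBlDr.
exists s0; first by rewrite s0ge s0le.
split=> // /interior_cnormP [r r0 H].
have s0lt1 : s0 < 1.
  rewrite lt_neqAle s0le andbT; apply/eqP => s01.
  by apply: Fw; rewrite -(lerpC1 u w) -s01.
pose t := Num.min (1 - s0) (r / (2 * cnorm (w - u))).
have t0 : 0 < t by rewrite lt_min subr_gt0 s0lt1 /= divr_gt0 // mulr_gt0.
have t1 : t <= 1 - s0 by rewrite ge_min lexx.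
have t2 : t <= r / (2 * cnorm (w - u)) by rewrite ge_min lexx orbT.
have : S (s0 + t).
  split; first by apply/andP; split; lra.
  apply: H; rewrite cnorm_lerpB opprD addNKr normrN gtr0_norm //.
  rewrite -ltr_pdivlMr //; apply: (le_lt_trans t2).
  rewrite ltr_pM2l // ltf_pV2 ?posrE ?mulr_gt0 //; lra.
by move=> /(sup_upper_bound hS); rewrite -/s0; lra.
Qed.

Lemma cnorm_lerpC_lt (p u w : C) (s r : R) : 0 <= s <= 1 ->
  cnorm (p - u) < r -> cnorm (p - w) < r -> cnorm (p - lerpC u w s) < r.
Proof.
move=> /andP[s0 s1] hu hw.
have -> : p - lerpC u w s = RtoC (1 - s) * (p - u) + RtoC s * (p - w).
  by rewrite /lerpC RtoCB /RtoC rmorph1; ring.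
apply: (le_lt_trans (ler_cnormD _ _)).
rewrite !cnormM !cnorm_RtoC !ger0_norm ?subr_ge0 //.
set a := cnorm (p - u) in hu *; set b := cnorm (p - w) in hw *.
have ha : (1 - s) * a <= (1 - s) * Num.max a b.
  by rewrite ler_wpM2l ?subr_ge0 ?le_max ?lexx.
have hb : s * b <= s * Num.max a b by rewrite ler_wpM2l ?le_max ?lexx ?orbT.
have : Num.max a b < r by rewrite gt_max hu hw.
lra.
Qed.

Lemma cnorm_imag (c : R) : cnorm (Complex 0 c : C) = `|c|.
Proof. by rewrite /cnorm /= expr0n /= add0r sqrtr_sqr. Qed.

Lemma lerpC_rotate_eq0 (u w : C) (c s1 s2 : R) : w != u -> c != 0 ->
  lerpC u w s1 = lerpC u (w + Complex 0 c * (w - u)) s2 -> s2 = 0.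
Proof.
move=> wu c0; rewrite /lerpC => /addrI.
have -> : w + Complex 0 c * (w - u) - u = (RtoC 1 + Complex 0 c) * (w - u).
  by rewrite /RtoC rmorph1; ring.
rewrite mulrA; move: wu; rewrite -subr_eq0 => /mulIf inj /inj.
move=> /(congr1 (fun z : C => complex.Im (z : R[i]))) /=.
rewrite add0r mul0r addr0 => /esym/eqP.
by rewrite mulf_eq0 (negbTE c0) orbF => /eqP.
Qed.

End Segments.

Lemma closure_closure (T : topologicalType) (A : set T) :
  closure (closure A) = closure A.
Proof. by rewrite -(closure_id _).1 //; exact: closed_closure. Qed.

Section BoundaryOfClosure.
Variable R : realType.
Local Notation C := (Cx R).
Variable U : set C.

Lemma boundary_closure_notin_open p : open U -> boundary (closure U) p -> ~ U p.
Proof.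
move=> oU [_ nip] Up; apply/nip/(interiorS (@subset_closure _ U)).
by rewrite ((interior_id U).1 oU).
Qed.

Lemma closure_conj (A : set C) z : (forall z, A z -> A (conjC z)) ->
  closure A z -> closure A (conjC z).
Proof.
move=> sA /closure_cnormP h; apply/closure_cnormP => r /h[w Aw hw].
by exists (conjC w); [exact: sA | rewrite -conjCxB cnorm_conj].
Qed.

Lemma interior_conj (A : set C) z : (forall z, A z -> A (conjC z)) ->
  interior A (conjC z) -> interior A z.
Proof.
move=> sA /interior_cnormP [r r0 H]; apply/interior_cnormP; exists r => // w hw.
by rewrite -[w]conjCxK; apply/sA/H; rewrite -conjCxB cnorm_conj.
Qed.

Lemma boundary_closure_conj p : (forall z, U z -> U (conjC z)) ->
  boundary (closure U) p -> boundary (closure U) (conjC p).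
Proof.
move=> sU [cp nip]; have scU z := @closure_conj U z sU.
split.
  rewrite closure_closure in cp *.
  exact: scU.
move=> /(interior_conj scU) Ip.
exact: nip Ip.
Qed.

Lemma boundary_closure_lerpC p u w (r : R) :
  U u -> ~ closure U w -> cnorm (p - u) < r -> cnorm (p - w) < r ->
  exists2 s : R, 0 <= s <= 1 &
    boundary (closure U) (lerpC u w s) /\ cnorm (p - lerpC u w s) < r.
Proof.
move=> Uu Uw pu pw.
have [s s01 [Fs nIs]] :=
  closed_lerpC_frontier (@closed_closure _ U) (subset_closure Uu) Uw.
exists s; first exact: s01.
split; last exact: cnorm_lerpC_lt.
by rewrite /boundary closure_closure; split; [exact: Fs | exact: nIs].
Qed.

Lemma boundary_closure_not_isolated p (r : R) : open U ->
  boundary (closure U) p -> 0 < r ->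
  exists q, [/\ boundary (closure U) q, q != p & cnorm (p - q) < r].
Proof.
move=> oU bp r0; have Up := boundary_closure_notin_open oU bp.
case: bp; rewrite closure_closure => /closure_cnormP cp /interior_cnormP nip.
have r2 : 0 < r / 2 by rewrite divr_gt0.
have [u Uu pu] := cp _ r2.
have [w Uw pw] : exists2 w, ~ closure U w & cnorm (p - w) < r / 2.
  apply: contrapT => hn; apply: nip; exists (r / 2) => // z hz.
  by apply: contrapT => nz; apply: hn; exists z.
have [rho rho0 Hrho] : exists2 rho : R, 0 < rho &
    forall z, cnorm (w - z) < rho -> ~ closure U z.
  apply/nbhs_cnormP/open_nbhs_nbhs; split; last exact: Uw.
  exact/closed_openC/closed_closure.
have wu : w != u by apply/eqP => e; apply: Uw; rewrite e; exact: subset_closure.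
have d0 : 0 < cnorm (w - u) by rewrite cnorm_gt0 subr_eq0.
pose m := Num.min rho (r / 2 - cnorm (p - w)).
have m0 : 0 < m by rewrite lt_min rho0 subr_gt0 pw.
have [m1 m2] : m <= rho /\ m <= r / 2 - cnorm (p - w) by rewrite !ge_min !lexx orbT.
pose c := m / (2 * cnorm (w - u)).
have c0 : 0 < c by rewrite divr_gt0 // mulr_gt0.
pose w2 := w + Complex 0 c * (w - u).
have ww2 : cnorm (w - w2) = m / 2.
  have -> : w - w2 = - (Complex 0 c * (w - u)) by rewrite /w2; ring.
  rewrite cnormN cnormM cnorm_imag gtr0_norm //.
  by rewrite /c; field; rewrite gt_eqF.
have Uw2 : ~ closure U w2 by apply: Hrho; rewrite ww2; lra.
have pw2 : cnorm (p - w2) < r / 2.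
  have := ler_cnormD (p - w) (w - w2); rewrite addrA subrK ww2; lra.
have [s1 s1_01 [b1 n1]] := boundary_closure_lerpC Uu Uw pu pw.
have [s2 s2_01 [b2 n2]] := boundary_closure_lerpC Uu Uw2 pu pw2.
have [e1|ne1] := eqVneq (lerpC u w s1) p; last first.
  by exists (lerpC u w s1); split; [exact: b1 | exact: ne1 | lra].
have [e2|ne2] := eqVneq (lerpC u w2 s2) p; last first.
  by exists (lerpC u w2 s2); split; [exact: b2 | exact: ne2 | lra].
have s20 := lerpC_rotate_eq0 wu (lt0r_neq0 c0) (etrans e1 (esym e2)).
by case: Up; rewrite -e2 s20 lerpC0.
Qed.

End BoundaryOfClosure.

Section ProductEstimates.
Variable R : realType.
Local Notation C := (Cx R).

Lemma cnorm_prod_le n (b : 'I_n -> C) (c : R) :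
  (forall i, cnorm (b i) <= c) -> cnorm (\prod_i b i) <= c ^+ n.
Proof.
elim: n b => [|n IH] b hb; first by rewrite big_ord0 cnorm1 expr0.
rewrite big_ord_recr /= cnormM exprSr.
by apply: ler_pM; rewrite ?cnorm_ge0 ?hb ?IH.
Qed.

Lemma cnorm_prodB_le n (a b : 'I_n -> C) (c e : R) : 1 <= c ->
  (forall i, cnorm (a i) <= c) -> (forall i, cnorm (b i) <= c) ->
  (forall i, cnorm (a i - b i) <= e) ->
  cnorm (\prod_i a i - \prod_i b i) <= n%:R * c ^+ n * e.
Proof.
move=> c1; elim: n a b => [|n IH] a b ha hb hab.
  by rewrite !big_ord0 subrr cnorm0 !mul0r.
rewrite !big_ord_recr /=.
set A := \prod_(i < n) _; set B := \prod_(i < n) _; set an := a _; set bn := b _.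
have -> : A * an - B * bn = (A - B) * an + B * (an - bn) by ring.
have hAB : cnorm (A - B) <= n%:R * c ^+ n * e by apply: IH => i.
have hB : cnorm B <= c ^+ n by apply: cnorm_prod_le.
have cn1 : 1 <= c ^+ n by rewrite exprn_ege1.
have e0 : 0 <= e := le_trans (cnorm_ge0 _) (hab ord0).
have h1 : cnorm (A - B) * cnorm an <= n%:R * c ^+ n * e * c.
  by apply: ler_pM; rewrite ?cnorm_ge0 ?ha.
have h2 : cnorm B * cnorm (an - bn) <= c ^+ n * e.
  by apply: ler_pM; rewrite ?cnorm_ge0 ?hab.
have h3 : c ^+ n * e <= c ^+ n * c * e.
  by rewrite -mulrA ler_wpM2l ?ler_peMl //; lra.
apply: (le_trans (ler_cnormD _ _)); rewrite !cnormM -natr1 exprSr.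
have -> : (n%:R + 1) * (c ^+ n * c) * e = n%:R * c ^+ n * e * c + c ^+ n * c * e by ring.
lra.
Qed.

End ProductEstimates.

Lemma finite_lower_bound_gt0 (R : realDomainType) (I : finType) (f : I -> R) :
  (forall i, 0 < f i) -> exists2 d : R, 0 < d & forall i, d <= f i.
Proof.
move=> f0; exists (\big[Num.min/1]_i f i).
  by elim/big_ind: _ => [|x y x0 y0|i _]; rewrite ?lt_min ?x0 ?y0 ?f0.
by move=> i; rewrite (bigD1 i) //= ge_min lexx.
Qed.

Lemma partial_fraction2 (F : fieldType) (a b z : F) : a - z != 0 -> b - z != 0 ->
  (a - z)^-1 - (b - z)^-1 = (b - a) * ((a - z)^-1 * (b - z)^-1).
Proof. by move=> az bz; field; rewrite az bz. Qed.

Lemma continuous_prod (T : topologicalType) (F : numFieldType) (I : Type)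
    (r : seq I) (f : I -> T -> F) x :
  (forall i, {for x, continuous (f i)}) ->
  {for x, continuous (fun y => \prod_(i <- r) f i y)}.
Proof.
move=> hf; elim: r => [|i r IH].
  rewrite (_ : (fun y => _) = cst 1); first exact: cst_continuous.
  by apply/funext => y; rewrite big_nil.
rewrite (_ : (fun y => _) = (fun y => f i y * \prod_(j <- r) f j y)).
  exact: continuousM.
by apply/funext => y; rewrite big_cons.
Qed.

Lemma cnorm_inv_pole_perturb (R : realType) (a b z : Cx R) (d : R) : 0 < d ->
  d <= cnorm (a - z) -> cnorm (a - b) <= d / 2 ->
  [/\ cnorm (a - z)^-1 <= 2 / d, cnorm (b - z)^-1 <= 2 / d &
      cnorm ((a - z)^-1 - (b - z)^-1) <= cnorm (a - b) * (2 / (d * d))].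
Proof.
move=> d0 daz dab; have d2 : 0 < d / 2 by rewrite divr_gt0.
have dbz : d / 2 <= cnorm (b - z).
  by have := ler_cnormD (a - b) (b - z); rewrite addrA subrK; lra.
have iaz : cnorm (a - z)^-1 <= d^-1.
  by rewrite cnormV lef_pV2 ?posrE // (lt_le_trans d0 daz).
have ibz : cnorm (b - z)^-1 <= (d / 2)^-1.
  by rewrite cnormV lef_pV2 ?posrE // (lt_le_trans d2 dbz).
have di : d^-1 <= 2 / d by rewrite ler_pdivlMr // mulVf ?gt_eqF //; lra.
rewrite invf_div in ibz; split; [lra | lra |].
have az : a - z != 0 by rewrite -cnorm_gt0 (lt_le_trans d0 daz).
have bz : b - z != 0 by rewrite -cnorm_gt0 (lt_le_trans d2 dbz).
rewrite partial_fraction2 // !cnormM cnorm_distC ler_wpM2l ?cnorm_ge0 //.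
have -> : 2 / (d * d) = d^-1 * (2 / d) by rewrite invfM; ring.
by apply: ler_pM; rewrite ?cnorm_ge0.
Qed.

Lemma conj_cauchy_kernel (R : realType) N (xi : 'I_N -> Cx R) (x : 'rV[R]_N) :
  conjC (cauchy_kernel xi x) = cauchy_kernel (fun i => conjC (xi i)) x.
Proof.
rewrite /cauchy_kernel /conjC rmorph_prod; apply: eq_bigr => i _.
by rewrite fmorphV rmorphB; congr (_ - _)^-1; exact: conjCx_RtoC.
Qed.

Lemma Re_mul_neq0 (R : realType) (z : Cx R) (t : R) : z != 0 ->
  `|complex.Im (z : R[i]) / complex.Re (z : R[i])| < t ->
  complex.Re ((Complex t 1 * z : Cx R) : R[i]) != 0.
Proof.
case: z => p q /= nz ht; rewrite mul1r.
have [p0|p0] := eqVneq p 0.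
  by rewrite p0 mulr0 sub0r oppr_eq0; apply: contra nz => /eqP q0; rewrite p0 q0.
apply/eqP => /eqP; rewrite subr_eq0 => /eqP tpq.
have tE : t = q / p by rewrite -tpq mulfK.
by move: ht; rewrite -tE => /(le_lt_trans (ler_norm _)); rewrite ltxx.
Qed.

Lemma exists_Re_mul_neq0 (R : realType) (z1 z2 z3 : Cx R) :
  z1 != 0 -> z2 != 0 -> z3 != 0 ->
  exists a : Cx R, [/\ complex.Re ((a * z1 : Cx R) : R[i]) != 0,
    complex.Re ((a * z2 : Cx R) : R[i]) != 0 & complex.Re ((a * z3 : Cx R) : R[i]) != 0].
Proof.
move=> n1 n2 n3; pose r (z : Cx R) := `|complex.Im (z : R[i]) / complex.Re (z : R[i])|.
have r1 := normr_ge0 (complex.Im (z1 : R[i]) / complex.Re (z1 : R[i])).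
have r2 := normr_ge0 (complex.Im (z2 : R[i]) / complex.Re (z2 : R[i])).
have r3 := normr_ge0 (complex.Im (z3 : R[i]) / complex.Re (z3 : R[i])).
exists (Complex (1 + r z1 + r z2 + r z3) 1).
by split; apply: Re_mul_neq0 => //; rewrite /r; lra.
Qed.

Lemma two_poles_eq (F : fieldType) (p q a b P Q : F) : p != q -> P != 0 ->
  p - a != 0 -> p - b != 0 -> q - a != 0 -> q - b != 0 ->
  (p - a)^-1 * P = (p - b)^-1 * Q -> (q - a)^-1 * P = (q - b)^-1 * Q -> a = b.
Proof.
move=> pq P0 pa pb qa qb ep eq.
have cross z : z - a != 0 -> z - b != 0 -> (z - a)^-1 * P = (z - b)^-1 * Q ->
    P * (z - b) = Q * (z - a).
  by move=> za zb e; rewrite -[P](mulVKf za) e; field.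
have ep' := cross _ pa pb ep; have eq' := cross _ qa qb eq.
have PQ : P = Q.
  apply: (mulIf (_ : p - q != 0)); first by rewrite subr_eq0.
  transitivity (P * (p - b) - P * (q - b)); first by ring.
  by rewrite ep' eq'; ring.
have : P * (a - b) = 0.
  by transitivity (P * (p - b) - Q * (p - a)); [rewrite PQ; ring | rewrite ep' subrr].
by move/eqP; rewrite mulf_eq0 (negbTE P0) subr_eq0 => /eqP.
Qed.

Section SqrtIteration.
Variable R : realFieldType.

(* Polynomials in [u] converging to [sqrt u] uniformly on [0, 1]; they have no
   constant term because the algebra [G] below need not contain constants. *)
Fixpoint sqrt_iter (n : nat) (u : R) : R :=
  if n is n'.+1 then sqrt_iter n' u + (u - sqrt_iter n' u * sqrt_iter n' u) / 2
  else 0.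

Lemma bernoulli_le1 n (a : R) : 0 <= a <= 1 -> (1 - a) ^+ n * (1 + n%:R * a) <= 1.
Proof.
move=> /andP[a0 a1]; elim: n => [|n IH]; first by rewrite expr0 mul0r addr0 mulr1.
rewrite exprSr -natr1; apply: le_trans IH; rewrite -mulrA.
apply: ler_wpM2l; first by rewrite exprn_ge0 // subr_ge0.
have : 0 <= (n%:R + 1) * a * a by rewrite !mulr_ge0 // addr_ge0 // ler0n.
have : 0 <= n%:R * a :> R by rewrite mulr_ge0 // ler0n.
nra.
Qed.

Lemma sqrt_iter_bound n (v : R) : 0 <= v <= 1 ->
  0 <= sqrt_iter n (v * v) <= v /\ v - sqrt_iter n (v * v) <= v * (1 - v / 2) ^+ n.
Proof.
move=> /andP[v0 v1]; elim: n => [|n [/andP[q0 q1] IH]] /=.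
  by rewrite lexx v0 subr0 expr0 mulr1.
set q := sqrt_iter n (v * v) in q0 q1 IH *.
have e : v - (q + (v * v - q * q) / 2) = (v - q) * (1 - (v + q) / 2) by field.
split.
  have : 0 <= (v - q) * (v + q) by rewrite mulr_ge0 //; lra.
  have : (v - q) * (v + q) <= (v - q) * 2 by rewrite ler_wpM2l; lra.
  by move=> h1 h2; apply/andP; split; lra.
by rewrite e exprSr mulrA; apply: ler_pM; lra.
Qed.

Lemma sqrt_iter_err n (v : R) : 0 <= v <= 1 ->
  0 <= v - sqrt_iter n (v * v) <= 2 / (n%:R + 1).
Proof.
move=> hv; have [/andP[q0 q1] h] := sqrt_iter_bound n hv.
rewrite subr_ge0 q1 /=; apply: le_trans h _; case/andP: hv => v0 v1.
have hb := @bernoulli_le1 n (v / 2) (ltac:(apply/andP; split; lra)).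
have h0 : 0 <= (1 - v / 2) ^+ n by rewrite exprn_ge0 //; lra.
have n0 : 0 <= n%:R :> R by exact: ler0n.
rewrite ler_pdivlMr; last by lra.
have : v * (1 - v / 2) ^+ n * (1 + n%:R * (v / 2)) <= v by nra.
nra.
Qed.

End SqrtIteration.

Lemma open_subspace_lt (R : realType) (T : topologicalType) (K : set T)
    (g h : T -> R) : {within K, continuous g} -> {within K, continuous h} ->
  open ([set z | g z < h z] : set (subspace K)).
Proof.
move=> gc hc.
have -> : ([set z | g z < h z] : set (subspace K)) =
    (fun z : subspace K => h z - g z) @^-1` [set r | 0 < r].
  by apply/seteqP; split => z /=; rewrite subr_gt0.
apply: open_comp; last exact: open_gt.
by move=> z _; apply: continuousB; [exact: hc | exact: gc].
Qed.

Lemma compact_subspace_cover (T : ptopologicalType) (K : set T) :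
  compact K -> cover_compact (K : set (subspace K)).
Proof.
move=> cK; rewrite -compact_cover.
by have := (compact_subspaceIP K K).2; rewrite setIid; apply.
Qed.

Section StoneWeierstrass.
Variables (R : realType) (T : ptopologicalType) (K : set T).
Hypothesis cK : compact K.
Variable G : (T -> R) -> Prop.
Hypothesis Gc : forall g, G g -> {within K, continuous g}.
Hypothesis Gb : forall g, G g -> exists c : R, forall x, K x -> `|g x| <= c.
Hypothesis G0 : G (fun=> 0).
Hypothesis GD : forall f g, G f -> G g -> G (fun x => f x + g x).
Hypothesis GZ : forall a f, G f -> G (fun x => a * f x).
Hypothesis GM : forall f g, G f -> G g -> G (fun x => f x * g x).
Hypothesis GL : forall g, {within K, continuous g} ->
  (forall e : R, 0 < e -> exists h, G h /\ forall x, K x -> `|g x - h x| < e) -> G g.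
Hypothesis Gsep : forall x y, K x -> K y -> x <> y ->
  exists h, [/\ G h, h x <> h y, h x <> 0 & h y <> 0].
Hypothesis Gnz : forall x, K x -> exists h, G h /\ h x <> 0.

Lemma G_sqrt_iter n u : G u -> G (fun x => sqrt_iter n (u x)).
Proof.
move=> Gu; elim: n => [|n IH] //=.
rewrite (_ : (fun x => _) = fun x => sqrt_iter n (u x) +
  2^-1 * (u x + (-1) * (sqrt_iter n (u x) * sqrt_iter n (u x)))).
  by apply: GD => //; apply/GZ/GD => //; apply/GZ/GM.
by apply/funext => x; ring.
Qed.

Lemma G_abs g : G g -> G (fun x => `|g x|).
Proof.
move=> Gg; apply: GL.
  by move=> x; apply: continuous_comp; [exact: Gc | exact: norm_continuous].
have [c hc] := Gb Gg; pose c0 := Num.max c 1.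
have c00 : 0 < c0 by rewrite lt_max ltr01 orbT.
move=> e e0; have [n hn] : exists n : nat, c0 * (2 / (n%:R + 1)) < e.
  exists (Num.Def.archi_bound (2 * c0 / e)).
  have := @archi_boundP _ (2 * c0 / e) (ltac:(apply: divr_ge0; lra)).
  set m := (Num.Def.archi_bound _)%:R => hm.
  have m0 : 0 <= m by rewrite /m ler0n.
  rewrite mulrA ltr_pdivrMr; last by lra.
  by rewrite ltr_pdivrMr in hm; lra.
exists (fun x => c0 * sqrt_iter n ((c0^-1 * g x) * (c0^-1 * g x))).
split; first by apply/GZ/G_sqrt_iter/GM; apply: GZ.
move=> x Kx; pose v := c0^-1 * `|g x|.
have hv : 0 <= v <= 1.
  apply/andP; split; first by rewrite /v mulr_ge0 // invr_ge0 ltW.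
  by rewrite /v ler_pdivrMl // mulr1 le_max hc.
have gg : `|g x| * `|g x| = g x * g x by rewrite -normrM ger0_norm // -expr2 sqr_ge0.
have -> : c0^-1 * g x * (c0^-1 * g x) = v * v.
  by rewrite /v; transitivity (c0^-1 * c0^-1 * (`|g x| * `|g x|)); [rewrite gg|]; ring.
have /andP[h1 h2] := sqrt_iter_err n hv.
have -> : `|g x| = c0 * v by rewrite /v mulrA mulfV ?mul1r // gt_eqF.
rewrite -mulrBr normrM gtr0_norm // ger0_norm //.
by apply: le_lt_trans hn; rewrite ler_wpM2l // ltW.
Qed.

Lemma G_max f g : G f -> G g -> G (fun x => Num.max (f x) (g x)).
Proof.
move=> Gf Gg.
rewrite (_ : (fun x => _) = fun x => 2^-1 * (f x + g x + `|f x + (-1) * g x|)).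
  by apply/GZ/GD; [exact: GD | apply/G_abs/GD => //; exact: GZ].
by apply/funext => x; rewrite maxr_absE mulN1r mulrC.
Qed.

Lemma G_min f g : G f -> G g -> G (fun x => Num.min (f x) (g x)).
Proof.
move=> Gf Gg.
rewrite (_ : (fun x => _) = fun x => 2^-1 * (f x + g x + (-1) * `|f x + (-1) * g x|)).
  by apply/GZ/GD; [exact: GD | apply/GZ/G_abs/GD => //; exact: GZ].
by apply/funext => x; rewrite minr_absE !mulN1r mulrC.
Qed.


Lemma G_interp (f : T -> R) x y : K x -> K y ->
  exists g, [/\ G g, g x = f x & g y = f y].
Proof.
move=> Kx Ky; have [<-|nxy] := pselect (x = y).
  have [h [Gh /eqP hx]] := Gnz Kx.
  by exists (fun z => (f x / h x) * h z); split; rewrite ?mulfVK //; exact: GZ.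
have [h [Gh /eqP hxy /eqP hx0 /eqP hy0]] := Gsep Kx Ky nxy.
set a := h x in hxy hx0 *; set b := h y in hxy hy0 *.
have ba : b - a != 0 by rewrite subr_eq0 eq_sym.
pose al := (f x * b * b - f y * a * a) / (a * b * (b - a)).
pose be := (f y * a - f x * b) / (a * b * (b - a)).
exists (fun z => al * h z + be * (h z * h z)); split.
- by apply: GD; apply: GZ => //; exact: GM.
- by rewrite -/a /al /be; field; rewrite hx0 hy0 ba.
- by rewrite -/b /al /be; field; rewrite hx0 hy0 ba.
Qed.

Lemma G_bigmin (I : eqType) (s : seq I) (g0 : T -> R) (F : I -> T -> R) :
  G g0 -> (forall i, i \in s -> G (F i)) ->
  G (fun z => \big[Num.min/g0 z]_(i <- s) F i z).
Proof.
elim: s => [|i s IH] Gg0 GF.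
  by rewrite (_ : (fun z => _) = g0) //; apply/funext => z; rewrite big_nil.
rewrite (_ : (fun z => _) = fun z =>
  Num.min (F i z) (\big[Num.min/g0 z]_(j <- s) F j z)).
  apply: G_min; first by apply: GF; rewrite mem_head.
  by apply: IH => // j js; apply: GF; rewrite in_cons js orbT.
by apply/funext => z; rewrite big_cons.
Qed.

Lemma G_bigmax (I : eqType) (s : seq I) (g0 : T -> R) (F : I -> T -> R) :
  G g0 -> (forall i, i \in s -> G (F i)) ->
  G (fun z => \big[Num.max/g0 z]_(i <- s) F i z).
Proof.
elim: s => [|i s IH] Gg0 GF.
  by rewrite (_ : (fun z => _) = g0) //; apply/funext => z; rewrite big_nil.
rewrite (_ : (fun z => _) = fun z =>
  Num.max (F i z) (\big[Num.max/g0 z]_(j <- s) F j z)).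
  apply: G_max; first by apply: GF; rewrite mem_head.
  by apply: IH => // j js; apply: GF; rewrite in_cons js orbT.
by apply/funext => z; rewrite big_cons.
Qed.

Variable f : T -> R.
Hypothesis fc : {within K, continuous f}.

Lemma G_approx_above x e : K x -> 0 < e ->
  exists g, [/\ G g, g x = f x & forall z, K z -> g z < f z + e].
Proof.
move=> Kx e0.
have /choice [g hg] : forall y, exists g, K y -> [/\ G g, g x = f x & g y = f y].
  move=> y; have [Ky|nKy] := pselect (K y); last by exists (fun=> 0) => /nKy.
  by have [g hg] := G_interp f Kx Ky; exists g.
pose V y := [set z | g y z < f z + e].
have oV y : K y -> open (V y : set (subspace K)).
  move=> /hg[/Gc gc _ _]; apply: open_subspace_lt gc _.
  by move=> z; apply: continuousD; [exact: fc | exact: cst_continuous].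
have hcov : (K : set (subspace K)) `<=` cover K V.
  move=> z Kz; exists z; first exact: Kz.
  by have [_ _ gz] := hg z Kz; rewrite /V /= gz ltrDl.
have [D DK cov] := compact_subspace_cover cK oV hcov.
exists (fun z => \big[Num.min/g x z]_(y <- finmap.enum_fset D) g y z); split.
- by apply: G_bigmin => [|y /DK/set_mem/hg []]; case: (hg x Kx).
- have [_ gxx _] := hg x Kx.
  rewrite big_seq bigmin_eq_id // => y /DK/set_mem/hg [_ gyx _].
  by rewrite gxx gyx.
- move=> z /cov [y yD Vyz]; apply: le_lt_trans Vyz.
  exact: ge_bigmin_seq.
Qed.

Theorem stone_weierstrass e : 0 < e ->
  exists g, G g /\ forall x, K x -> `|f x - g x| < e.
Proof.
move=> e0; have [[x0 Kx0]|nK] := pselect (exists x, K x); last first.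
  by exists (fun=> 0); split => // x Kx; case: nK; exists x.
have /choice [h hh] : forall x, exists g,
    K x -> [/\ G g, g x = f x & forall z, K z -> g z < f z + e].
  move=> x; have [Kx|nKx] := pselect (K x); last by exists (fun=> 0) => /nKx.
  by have [g hg] := G_approx_above Kx e0; exists g.
pose W y := [set z | f z - e < h y z].
have oW y : K y -> open (W y : set (subspace K)).
  move=> /hh[/Gc hc _ _]; apply: open_subspace_lt _ hc.
  by move=> z; apply: continuousB; [exact: fc | exact: cst_continuous].
have hcov : (K : set (subspace K)) `<=` cover K W.
  move=> z Kz; exists z; first exact: Kz.
  by have [_ hz _] := hh z Kz; rewrite /W /= hz gtrBl.
have [D DK cov] := compact_subspace_cover cK oW hcov.
exists (fun z => \big[Num.max/h x0 z]_(y <- finmap.enum_fset D) h y z); split.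
  by apply: G_bigmax => [|y /DK/set_mem/hh []]; case: (hh x0 Kx0).
move=> z Kz; rewrite ltr_norml; apply/andP; split.
  suff : \big[Num.max/h x0 z]_(y <- finmap.enum_fset D) h y z < f z + e by lra.
  rewrite big_seq; apply: bigmax_lt => [|y /DK/set_mem Ky].
    by have [_ _ ->] := hh x0 Kx0.
  by have [_ _ ->] := hh y Ky.
have [y yD Wyz] := cov z Kz.
suff : f z - e < \big[Num.max/h x0 z]_(y <- finmap.enum_fset D) h y z by lra.
by apply: lt_le_trans Wyz _; exact: le_bigmax_seq.
Qed.

End StoneWeierstrass.

Section CauchyKernel.
Variables (R : realType) (N : nat) (Ms : 'I_N -> set R) (Us : 'I_N -> set (Cx R)).
Local Notation C := (Cx R).
Hypothesis oU : forall i, open (Us i).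
Hypothesis MU : forall i x, Ms i x -> Us i (RtoC x).
Hypothesis Mcl : forall i, closed (Ms i).
Local Notation K := [set x : 'rV[R]_N | forall i, Ms i (x ord0 i)].

Definition admissible (xi : 'I_N -> C) := forall i, boundary (closure (Us i)) (xi i).

Lemma boundary_pole_dist_gt0 i q : boundary (closure (Us i)) q ->
  exists2 d : R, 0 < d & forall t, Ms i t -> d <= cnorm (q - RtoC t).
Proof.
move=> bq; have [Im0|Im_neq0] := eqVneq (complex.Im (q : R[i])) 0; last first.
  exists `|complex.Im (q : R[i])|; first by rewrite normr_gt0.
  move=> t _; have := ler_Im_cnorm (q - RtoC t).
  by case: q {bq Im_neq0} => a b /=; rewrite subr0.
have qE : q = RtoC (complex.Re (q : R[i])) by case: q Im0 {bq} => a b /= ->.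
have nM : ~ Ms i (complex.Re (q : R[i])).
  by move=> /MU; rewrite -qE; exact: (boundary_closure_notin_open (@oU i) bq).
have /nbhs_ballP [r r0 H] : nbhs (complex.Re (q : R[i])) (~` Ms i).
  by apply: open_nbhs_nbhs; split; [exact: closed_openC | exact: nM].
exists r; first exact: r0.
move=> t Mt; rewrite leNgt; apply/negP => h; apply: (H t) Mt.
by rewrite -ball_normE /=; move: h; rewrite {1}qE -RtoCB cnorm_RtoC.
Qed.

Lemma admissible_dist_gt0 xi : admissible xi ->
  exists2 d : R, 0 < d & forall i t, Ms i t -> d <= cnorm (xi i - RtoC t).
Proof.
move=> v; have /choice [f hf] : forall i, exists d : R,
    0 < d /\ forall t, Ms i t -> d <= cnorm (xi i - RtoC t).
  by move=> i; have [d d0 h] := boundary_pole_dist_gt0 (v i); exists d.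
have [d d0 df] := finite_lower_bound_gt0 (fun i => (hf i).1).
by exists d => // i t Mt; exact: le_trans (df i) ((hf i).2 t Mt).
Qed.

Lemma admissible_pole_neq0 xi x i : admissible xi -> K x ->
  xi i - RtoC (x ord0 i) != 0.
Proof.
move=> v Kx; rewrite subr_eq0; apply/eqP => e.
by apply: (boundary_closure_notin_open (@oU i) (v i)); rewrite e; exact: MU.
Qed.

Lemma cauchy_kernel_neq0 xi x : admissible xi -> K x -> cauchy_kernel xi x != 0.
Proof.
move=> v Kx; apply/prodf_neq0 => i _; rewrite invr_eq0.
exact: admissible_pole_neq0.
Qed.

Lemma cauchy_kernel_bounded xi : admissible xi ->
  exists2 c : R, 0 <= c & forall x, K x -> cnorm (cauchy_kernel xi x) <= c.
Proof.
move=> v; have [d d0 hd] := admissible_dist_gt0 v.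
exists (d^-1 ^+ N); first by rewrite exprn_ge0 // invr_ge0 ltW.
move=> x Kx; apply: cnorm_prod_le => i.
by rewrite cnormV lef_pV2 ?posrE ?hd // (lt_le_trans d0 (hd _ _ (Kx i))).
Qed.

Lemma cauchy_kernel_lipschitz xi : admissible xi ->
  exists d L : R, [/\ 0 < d, 0 <= L & forall (r : R) eta, r <= d / 2 ->
    (forall i, cnorm (xi i - eta i) <= r) ->
    forall x, K x -> cnorm (cauchy_kernel xi x - cauchy_kernel eta x) <= L * r].
Proof.
move=> v; have [d d0 hd] := admissible_dist_gt0 v.
pose c := Num.max 1 (2 / d).
have c1 : 1 <= c by rewrite le_max lexx.
have c2 : 2 / d <= c by rewrite le_max lexx orbT.
have dd0 : 0 <= 2 / (d * d) by rewrite divr_ge0 // ltW // mulr_gt0.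
exists d, (N%:R * c ^+ N * (2 / (d * d))); split; first exact: d0.
  have c0 : 0 <= c := le_trans ler01 c1.
  by apply: mulr_ge0 => //; apply: mulr_ge0; [exact: ler0n | exact: exprn_ge0].
move=> r eta rd heta x Kx.
have E i := cnorm_inv_pole_perturb d0 (hd i _ (Kx i)) (le_trans (heta i) rd).
have -> : N%:R * c ^+ N * (2 / (d * d)) * r = N%:R * c ^+ N * (r * (2 / (d * d))).
  by ring.
apply: cnorm_prodB_le => [//|i|i|i]; have [h1 h2 h3] := E i.
- exact: le_trans h1 c2.
- exact: le_trans h2 c2.
- by apply: le_trans h3 _; rewrite ler_wpM2r.
Qed.

Lemma cauchy_kernel_perturb xi e : admissible xi -> 0 < e ->
  exists2 r : R, 0 < r & forall eta, (forall i, cnorm (xi i - eta i) < r) ->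
  forall x, K x -> cnorm (cauchy_kernel xi x - cauchy_kernel eta x) < e.
Proof.
move=> v e0; have [d [L [d0 L0 HL]]] := cauchy_kernel_lipschitz v.
have L1 : 0 < L + 1 by lra.
pose r := Num.min (d / 2) (e / (L + 1)).
have [rd rL] : r <= d / 2 /\ r <= e / (L + 1) by rewrite !ge_min !lexx orbT.
have r0 : 0 < r by rewrite lt_min !divr_gt0.
exists r; first exact: r0.
move=> eta heta x Kx; have := HL r eta rd (fun i => ltW (heta i)) x Kx.
move: rL; rewrite ler_pdivlMr // => rL; nra.
Qed.

Lemma cauchy_kernel_continuous xi x : admissible xi -> K x ->
  {for x, continuous (cauchy_kernel xi)}.
Proof.
move=> v Kx; apply: continuous_prod => i.
apply: continuousV; first exact: admissible_pole_neq0.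
apply: (@continuousB C C^o _ (fun=> xi i) (fun y : 'rV[R]_N => RtoC (y ord0 i))).
  exact: cst_continuous.
apply: (continuous_comp (f := fun y : 'rV[R]_N => y ord0 i)).
  exact: coord_continuous.
exact: RtoC_continuous.
Qed.

Definition kernel_sum (s : seq (C * ('I_N -> C))) (x : 'rV[R]_N) : C :=
  \sum_(p <- s) p.1 * cauchy_kernel p.2 x.

Definition admissible_seq (s : seq (C * ('I_N -> C))) :=
  forall p, List.In p s -> admissible p.2.

Definition kernel_span (h : 'rV[R]_N -> C) :=
  exists2 s, admissible_seq s & forall x, K x -> h x = kernel_sum s x.

Definition kernel_approx (g : 'rV[R]_N -> C) := forall e : R, 0 < e ->
  exists2 h, kernel_span h & forall x, K x -> cnorm (g x - h x) < e.

Lemma kernel_span_ext h1 h2 : (forall x, K x -> h1 x = h2 x) ->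
  kernel_span h1 -> kernel_span h2.
Proof. by move=> e [s vs hs]; exists s => // x Kx; rewrite -e ?hs. Qed.

Lemma kernel_span0 : kernel_span (fun=> 0).
Proof. by exists [::] => // x _; rewrite /kernel_sum big_nil. Qed.

Lemma kernel_spanD h1 h2 : kernel_span h1 -> kernel_span h2 ->
  kernel_span (fun x => h1 x + h2 x).
Proof.
move=> [s1 v1 e1] [s2 v2 e2]; exists (s1 ++ s2).
  by move=> p /List.in_app_iff [] ?; [exact: v1 | exact: v2].
move=> x Kx; rewrite /kernel_sum big_cat.
by rewrite -/(kernel_sum s1 x) -/(kernel_sum s2 x) e1 ?e2.
Qed.

Lemma kernel_spanZ a h : kernel_span h -> kernel_span (fun x => a * h x).
Proof.
move=> [s v e]; exists [seq (a * p.1, p.2) | p <- s].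
  by move=> p /List.in_map_iff [q [<- Hq]]; exact: v Hq.
move=> x Kx; rewrite e // /kernel_sum big_map mulr_sumr.
by apply: eq_bigr => p _; rewrite mulrA.
Qed.

Lemma kernel_span_sum (I : Type) (r : seq I) (F : I -> 'rV[R]_N -> C) :
  (forall i, kernel_span (F i)) -> kernel_span (fun x => \sum_(i <- r) F i x).
Proof.
move=> hF; elim: r => [|i r IH].
  by apply: kernel_span_ext kernel_span0 => x _; rewrite big_nil.
by apply: kernel_span_ext (kernel_spanD (hF i) IH) => x _; rewrite big_cons.
Qed.

Lemma kernel_span_kernel a xi : admissible xi ->
  kernel_span (fun x => a * cauchy_kernel xi x).
Proof.
move=> v; exists [:: (a, xi)]; first by move=> p [<-|[]].
by move=> x _; rewrite /kernel_sum big_seq1.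
Qed.

(* Partial fractions in each variable: the product of two kernels with
   pairwise distinct poles is a combination of the 2^N kernels whose poles
   are picked coordinatewise from [xi] and [eta]. *)
Lemma kernel_span_kernelM xi eta : admissible xi -> admissible eta ->
  (forall i, xi i != eta i) ->
  kernel_span (fun x => cauchy_kernel xi x * cauchy_kernel eta x).
Proof.
move=> vx ve ne.
pose P := \prod_i (eta i - xi i)^-1.
pose sg (f : {ffun 'I_N -> bool}) : C := \prod_i (if f i then 1 else -1).
pose z (f : {ffun 'I_N -> bool}) i := if f i then xi i else eta i.
apply: (@kernel_span_ext
  (fun x => \sum_(f : {ffun 'I_N -> bool}) (P * sg f) * cauchy_kernel (z f) x)).
  move=> x Kx; rewrite /cauchy_kernel -big_split /=.
  have -> : \prod_i ((xi i - RtoC (x ord0 i))^-1 * (eta i - RtoC (x ord0 i))^-1) =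
      \prod_i ((eta i - xi i)^-1 * \sum_(b : bool)
        (if b then (xi i - RtoC (x ord0 i))^-1 else - (eta i - RtoC (x ord0 i))^-1)).
    apply: eq_bigr => i _.
    rewrite big_bool /= partial_fraction2 ?admissible_pole_neq0 //.
    by rewrite mulrA mulVf ?mul1r // subr_eq0 eq_sym.
  rewrite big_split /= -/P bigA_distr_bigA /= mulr_sumr; apply: eq_bigr => f _.
  rewrite -mulrA; congr (_ * _); rewrite /sg -big_split /=.
  by apply: eq_bigr => i _; rewrite /z; case: (f i); rewrite ?mul1r ?mulN1r.
apply: kernel_span_sum => f; apply: kernel_span_kernel => i; rewrite /z.
by case: (f i); [exact: vx | exact: ve].
Qed.

Lemma kernel_approx_span h : kernel_span h -> kernel_approx h.
Proof.
move=> sh e e0; exists h; first exact: sh.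
by move=> x _; rewrite subrr cnorm0.
Qed.

Lemma kernel_approx_ext g1 g2 : (forall x, K x -> g1 x = g2 x) ->
  kernel_approx g1 -> kernel_approx g2.
Proof.
move=> e hg e0 /hg [h sh hh]; exists h; first exact: sh.
by move=> x Kx; rewrite -e //; exact: hh.
Qed.

Lemma kernel_approxD g1 g2 : kernel_approx g1 -> kernel_approx g2 ->
  kernel_approx (fun x => g1 x + g2 x).
Proof.
move=> h1 h2 e e0; have e2 : 0 < e / 2 by rewrite divr_gt0.
have [k1 s1 hk1] := h1 _ e2; have [k2 s2 hk2] := h2 _ e2.
exists (fun x => k1 x + k2 x); first exact: kernel_spanD.
move=> x Kx; have := hk1 x Kx; have := hk2 x Kx.
have := ler_cnormD (g1 x - k1 x) (g2 x - k2 x).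
have -> : g1 x - k1 x + (g2 x - k2 x) = g1 x + g2 x - (k1 x + k2 x) by ring.
lra.
Qed.

Lemma kernel_approxZ a g : kernel_approx g -> kernel_approx (fun x => a * g x).
Proof.
move=> hg e e0; have a1 : 0 < cnorm a + 1 by have := cnorm_ge0 a; lra.
set t := e / (cnorm a + 1).
have t0 : 0 < t by rewrite divr_gt0.
have te : t * (cnorm a + 1) = e by rewrite divfK // gt_eqF.
have [k sk hk] := hg _ t0.
exists (fun x => a * k x); first exact: kernel_spanZ.
move=> x Kx; rewrite -mulrBr cnormM.
have := hk x Kx; have := cnorm_ge0 a; have := cnorm_ge0 (g x - k x); nra.
Qed.

Lemma kernel_approx_sum (I : Type) (r : seq I) (F : I -> 'rV[R]_N -> C) :
  (forall i, List.In i r -> kernel_approx (F i)) ->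
  kernel_approx (fun x => \sum_(i <- r) F i x).
Proof.
elim: r => [|i r IH] hF.
  apply: (@kernel_approx_ext (fun=> 0)); first by move=> x _; rewrite big_nil.
  exact/kernel_approx_span/kernel_span0.
apply: (@kernel_approx_ext (fun x => F i x + \sum_(j <- r) F j x)).
  by move=> x _; rewrite big_cons.
apply: kernel_approxD; first by apply: hF; left.
by apply: IH => j hj; apply: hF; right.
Qed.

Lemma admissible_avoid xi eta (r : R) : admissible eta -> 0 < r ->
  exists eta', [/\ admissible eta', forall i, xi i != eta' i &
                   forall i, cnorm (eta i - eta' i) < r].
Proof.
move=> ve r0.
have /choice [eta' h] : forall i, exists q,
    [/\ boundary (closure (Us i)) q, xi i != q & cnorm (eta i - q) < r].
  move=> i; have [exi|nxi] := eqVneq (xi i) (eta i).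
    have [q [bq nq hq]] := boundary_closure_not_isolated (@oU i) (ve i) r0.
    by exists q; split => //; rewrite exi eq_sym.
  by exists (eta i); split; [exact: ve | exact: nxi | rewrite subrr cnorm0].
by exists eta'; split => i; case: (h i).
Qed.

Lemma kernel_approx_kernelM xi eta : admissible xi -> admissible eta ->
  kernel_approx (fun x => cauchy_kernel xi x * cauchy_kernel eta x).
Proof.
move=> vx ve e e0.
have [c c0 hc] := cauchy_kernel_bounded vx.
have c1 : 0 < c + 1 by lra.
set t := e / (c + 1).
have t0 : 0 < t by rewrite divr_gt0.
have te : t * (c + 1) = e by rewrite divfK // gt_eqF.
have [r r0 hr] := cauchy_kernel_perturb ve t0.
have [eta' [ve' ne' near']] := admissible_avoid xi ve r0.
exists (fun x => cauchy_kernel xi x * cauchy_kernel eta' x).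
  exact: kernel_span_kernelM.
move=> x Kx; rewrite -mulrBr cnormM.
have := hr eta' near' x Kx; have := hc x Kx.
have := cnorm_ge0 (cauchy_kernel xi x).
have := cnorm_ge0 (cauchy_kernel eta x - cauchy_kernel eta' x); nra.
Qed.

Lemma kernel_approx_spanM h1 h2 : kernel_span h1 -> kernel_span h2 ->
  kernel_approx (fun x => h1 x * h2 x).
Proof.
move=> [s1 v1 e1] [s2 v2 e2].
apply: (@kernel_approx_ext (fun x => \sum_(p <- s1) \sum_(q <- s2)
    p.1 * q.1 * (cauchy_kernel p.2 x * cauchy_kernel q.2 x))).
  move=> x Kx; rewrite e1 ?e2 // /kernel_sum mulr_suml.
  by apply: eq_bigr => p _; rewrite mulr_sumr; apply: eq_bigr => q _; ring.
apply: kernel_approx_sum => p /v1 vp; apply: kernel_approx_sum => q /v2 vq.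
exact/kernel_approxZ/kernel_approx_kernelM.
Qed.

Lemma kernel_approxM (g1 g2 : 'rV[R]_N -> C) (c1 c2 : R) :
  (forall x, K x -> cnorm (g1 x) <= c1) -> (forall x, K x -> cnorm (g2 x) <= c2) ->
  kernel_approx g1 -> kernel_approx g2 -> kernel_approx (fun x => g1 x * g2 x).
Proof.
move=> b1 b2 h1 h2 e e0.
pose c := `|c1| + `|c2| + 1.
have c0 : 0 < c by rewrite /c; have := normr_ge0 c1; have := normr_ge0 c2; lra.
pose e1 := Num.min 1 (e / 2 / c).
have e10 : 0 < e1 by rewrite lt_min ltr01 /= !divr_gt0.
have [e11 e12] : e1 <= 1 /\ e1 <= e / 2 / c by rewrite !ge_min !lexx orbT.
have ce1 : c * e1 <= e / 2 by rewrite -ler_pdivlMl // mulrC.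
have [k1 s1 hk1] := h1 _ e10; have [k2 s2 hk2] := h2 _ e10.
have e20 : 0 < e / 2 by rewrite divr_gt0.
have [k sk hk] := kernel_approx_spanM s1 s2 e20.
exists k; first exact: sk.
move=> x Kx; have := hk x Kx; have := hk1 x Kx; have := hk2 x Kx.
have -> : g1 x * g2 x - k x =
   g1 x * (g2 x - k2 x) + k2 x * (g1 x - k1 x) + (k1 x * k2 x - k x) by ring.
have := ler_cnormD (g1 x * (g2 x - k2 x) + k2 x * (g1 x - k1 x)) (k1 x * k2 x - k x).
have := ler_cnormD (g1 x * (g2 x - k2 x)) (k2 x * (g1 x - k1 x)); rewrite !cnormM.
have nk2 : cnorm (k2 x) <= `|c2| + 1.
  have := ler_cnormD (g2 x) (k2 x - g2 x); rewrite addrC subrK cnorm_distC.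
  by have := b2 x Kx; have := ler_norm c2; have := hk2 x Kx; lra.
have n1 : cnorm (g1 x) <= `|c1| by apply: le_trans (b1 x Kx) (ler_norm c1).
have := cnorm_ge0 (g1 x); have := cnorm_ge0 (k2 x).
have := cnorm_ge0 (g2 x - k2 x); have := cnorm_ge0 (g1 x - k1 x).
have : `|c1| * e1 + (`|c2| + 1) * e1 = c * e1 by rewrite /c; ring.
nra.
Qed.

Definition real_kernel_approx (g : 'rV[R]_N -> R) :=
  [/\ {within K, continuous g}, exists c : R, forall x, K x -> `|g x| <= c &
      kernel_approx (fun x => RtoC (g x))].

Lemma real_kernel_approx0 : real_kernel_approx (fun=> 0).
Proof.
split; first by move=> x; exact: cst_continuous.
  by exists 0 => x _; rewrite normr0.
apply: (@kernel_approx_ext (fun=> 0)); first by move=> x _; rewrite RtoC0.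
exact/kernel_approx_span/kernel_span0.
Qed.

Lemma real_kernel_approxD f g : real_kernel_approx f -> real_kernel_approx g ->
  real_kernel_approx (fun x => f x + g x).
Proof.
move=> [cf [c1 b1] af] [cg [c2 b2] ag]; split.
- exact: within_continuousD.
- exists (c1 + c2) => x Kx; apply: le_trans (ler_normD _ _) _.
  by apply: lerD; [exact: b1 | exact: b2].
- apply: (@kernel_approx_ext (fun x => RtoC (f x) + RtoC (g x))).
    by move=> x _; rewrite RtoCD.
  exact: kernel_approxD.
Qed.

Lemma real_kernel_approxZ a f : real_kernel_approx f ->
  real_kernel_approx (fun x => a * f x).
Proof.
move=> [cf [c1 b1] af]; split.
- by move=> x; apply: continuousM; [exact: cst_continuous | exact: cf].
- exists (`|a| * c1) => x Kx; rewrite normrM; apply: ler_wpM2l => //; exact: b1.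
- apply: (@kernel_approx_ext (fun x => RtoC a * RtoC (f x))).
    by move=> x _; rewrite RtoCM.
  exact: kernel_approxZ.
Qed.

Lemma real_kernel_approxM f g : real_kernel_approx f -> real_kernel_approx g ->
  real_kernel_approx (fun x => f x * g x).
Proof.
move=> [cf [c1 b1] af] [cg [c2 b2] ag]; split.
- by move=> x; apply: continuousM; [exact: cf | exact: cg].
- exists (`|c1| * `|c2|) => x Kx; rewrite normrM.
  by apply: ler_pM => //; apply: le_trans (ler_norm _); [exact: b1 | exact: b2].
- apply: (@kernel_approx_ext (fun x => RtoC (f x) * RtoC (g x))).
    by move=> x _; rewrite RtoCM.
  apply: (kernel_approxM (c1 := c1) (c2 := c2)) => //.
    by move=> x Kx; rewrite cnorm_RtoC b1.
  by move=> x Kx; rewrite cnorm_RtoC b2.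
Qed.

Lemma real_kernel_approx_closed g : {within K, continuous g} ->
  (forall e : R, 0 < e ->
    exists h, real_kernel_approx h /\ forall x, K x -> `|g x - h x| < e) ->
  real_kernel_approx g.
Proof.
move=> cg H; split => //.
  have [h [[_ [c hc] _] hh]] := H 1 ltr01.
  exists (c + 1) => x Kx; have := hh x Kx; have := hc x Kx.
  by have := ler_normD (g x - h x) (h x); rewrite subrK; lra.
move=> e e0; have e2 : 0 < e / 2 by rewrite divr_gt0.
have [h [[_ _ ah] hh]] := H _ e2; have [k sk hk] := ah _ e2.
exists k; first exact: sk.
move=> x Kx; have := hh x Kx; have := hk x Kx.
have := ler_cnormD (RtoC (g x - h x)) (RtoC (h x) - k x).
by rewrite cnorm_RtoC RtoCB addrA subrK; lra.
Qed.

Hypothesis sU : forall i z, Us i z -> Us i (conjC z).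
Hypothesis Bne : forall i, boundary (closure (Us i)) !=set0.

Lemma admissible_exists : exists xi, admissible xi.
Proof. by have /choice [xi hxi] := Bne; exists xi. Qed.

Definition re_kernel (a : C) xi (x : 'rV[R]_N) : R :=
  complex.Re ((a * cauchy_kernel xi x : C) : R[i]).

Lemma real_kernel_approx_re_kernel a xi : admissible xi ->
  real_kernel_approx (re_kernel a xi).
Proof.
move=> v; split.
- apply: continuous_in_subspaceT => x /set_mem Kx.
  apply: (continuous_comp (f := fun y => a * cauchy_kernel xi y)).
    apply: continuousM; first exact: cst_continuous.
    exact: (cauchy_kernel_continuous v Kx).
  exact: Re_continuous.
- have [c c0 hc] := cauchy_kernel_bounded v.
  exists (cnorm a * c) => x Kx; apply: le_trans (ler_Re_cnorm _) _.
  by rewrite cnormM ler_wpM2l ?cnorm_ge0 ?hc.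
have vc : admissible (fun i => conjC (xi i)).
  by move=> i; apply: boundary_closure_conj; [exact: sU | exact: v].
apply: (@kernel_approx_ext (fun x => 2^-1 * a * cauchy_kernel xi x +
   2^-1 * conjC a * cauchy_kernel (fun i => conjC (xi i)) x)).
  move=> x Kx; rewrite /re_kernel RtoC_Re -conj_cauchy_kernel /conjC rmorphM /=.
  by rewrite -/(conjC _); ring.
by apply/kernel_approx_span/kernel_spanD; apply: kernel_span_kernel.
Qed.

Lemma cauchy_kernel_separates x y : K x -> K y -> x <> y ->
  exists2 xi, admissible xi & cauchy_kernel xi x != cauchy_kernel xi y.
Proof.
move=> Kx Ky nxy; have [p pv] := admissible_exists.
have [j nj] : exists j, x ord0 j != y ord0 j.
  apply: contrapT => H; apply: nxy; apply/rowP => j; apply/eqP.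
  by apply: contrapT => h; apply: H; exists j; apply/negP.
have [q [bq qp _]] := boundary_closure_not_isolated (@oU j) (pv j) ltr01.
pose xiq q i := if i == j then q else p i.
have vq q' : boundary (closure (Us j)) q' -> admissible (xiq q').
  by move=> bq' i; rewrite /xiq; case: eqP => [->|_]; [exact: bq' | exact: pv].
pose P (z : 'rV[R]_N) := \prod_(i | i != j) (p i - RtoC (z ord0 i))^-1.
have kE q' z : cauchy_kernel (xiq q') z = (q' - RtoC (z ord0 j))^-1 * P z.
  rewrite /cauchy_kernel (bigD1 j) //= /xiq eqxx; congr (_ * _).
  by apply: eq_bigr => i /negbTE ->.
have [e1|ne1] := eqVneq (cauchy_kernel (xiq (p j)) x) (cauchy_kernel (xiq (p j)) y);
  last by exists (xiq (p j)); [exact: vq (pv j) | exact: ne1].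
have [e2|ne2] := eqVneq (cauchy_kernel (xiq q) x) (cauchy_kernel (xiq q) y);
  last by exists (xiq q); [exact: vq _ bq | exact: ne2].
have ne q' z : boundary (closure (Us j)) q' -> K z -> q' - RtoC (z ord0 j) != 0.
  by move=> bq' Kz; have := admissible_pole_neq0 j (vq _ bq') Kz; rewrite /xiq eqxx.
have Px0 : P x != 0.
  by apply/prodf_neq0 => i _; rewrite invr_eq0 admissible_pole_neq0.
have pq : p j != q by rewrite eq_sym.
rewrite !kE in e1 e2; case/eqP: nj; apply: RtoC_inj.
exact: (two_poles_eq pq Px0 (ne _ _ (pv j) Kx) (ne _ _ (pv j) Ky)
  (ne _ _ bq Kx) (ne _ _ bq Ky) e1 e2).
Qed.

Lemma real_kernel_approx_separates x y : K x -> K y -> x <> y ->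
  exists h, [/\ real_kernel_approx h, h x <> h y, h x <> 0 & h y <> 0].
Proof.
move=> Kx Ky nxy; have [xi v ne] := cauchy_kernel_separates Kx Ky nxy.
have nB : cauchy_kernel xi x - cauchy_kernel xi y != 0 by rewrite subr_eq0.
have [a [ax ay axy]] := exists_Re_mul_neq0
  (cauchy_kernel_neq0 v Kx) (cauchy_kernel_neq0 v Ky) nB.
exists (re_kernel a xi); split; [exact: real_kernel_approx_re_kernel | | exact/eqP..].
by move=> /eqP; rewrite -subr_eq0 -raddfB -mulrBr; exact/negP.
Qed.

Lemma real_kernel_approx_nonvanishing x : K x ->
  exists h, real_kernel_approx h /\ h x <> 0.
Proof.
move=> Kx; have [p pv] := admissible_exists.
have nz := cauchy_kernel_neq0 pv Kx.
have [a [ax _ _]] := exists_Re_mul_neq0 nz nz nz.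
by exists (re_kernel a p); split; [exact: real_kernel_approx_re_kernel | exact/eqP].
Qed.

Hypothesis cK : compact K.

Lemma cauchy_kernel_dense f : {within K, continuous f} -> forall e : R, 0 < e ->
  exists2 s, admissible_seq s &
    forall x, K x -> cnorm (RtoC (f x) - kernel_sum s x) < e.
Proof.
move=> fc e e0; have e2 : 0 < e / 2 by rewrite divr_gt0.
have [g [[_ _ ag] hg]] := stone_weierstrass (G := real_kernel_approx) cK
  (fun g '(And3 c _ _) => c)
  (fun g '(And3 _ b _) => b) real_kernel_approx0 real_kernel_approxD
  real_kernel_approxZ real_kernel_approxM real_kernel_approx_closed
  real_kernel_approx_separates real_kernel_approx_nonvanishing fc e2.
have [h [s vs hs] hh] := ag _ e2.
exists s; first exact: vs.
move=> x Kx; rewrite -hs //; have := hg x Kx; have := hh x Kx.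
have := ler_cnormD (RtoC (f x - g x)) (RtoC (g x) - h x).
by rewrite cnorm_RtoC RtoCB addrA subrK; lra.
Qed.

End CauchyKernel.

Lemma compact_coord_closed (R : realType) N (Ms : 'I_N -> set R) :
  compact [set x : 'rV[R]_N | forall i, Ms i (x ord0 i)] ->
  (exists x0 : 'rV[R]_N, forall i, Ms i (x0 ord0 i)) -> forall i, closed (Ms i).
Proof.
move=> cK [x0 Kx0] i.
have -> : Ms i = (fun x : 'rV[R]_N => x ord0 i) @`
    [set x : 'rV[R]_N | forall i, Ms i (x ord0 i)].
  apply/seteqP; split=> [t Mt|t [x Kx <-]]; last exact: Kx.
  exists (\row_j (if j == i then t else x0 ord0 j)); last by rewrite mxE eqxx.
  by move=> j; rewrite mxE; case: eqVneq => [->|_].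
apply: compact_closed; first exact: Rhausdorff.
apply: continuous_compact => //; apply: continuous_subspaceT => x.
exact: coord_continuous.
Qed.

Lemma In_seq_nth (T : Type) (x0 : T) (s : seq T) k : (k < size s)%N ->
  List.In (nth x0 s k) s.
Proof. by elim: s k => [|a s IH] [|k] //= h; [left | right; apply: IH]. Qed.

Lemma kernel_sum_ord (R : realType) N (Us : 'I_N -> set (Cx R))
    (s : seq (Cx R * ('I_N -> Cx R))) p0 :
  admissible Us p0 -> admissible_seq Us s ->
  exists m (theta : 'I_m -> Cx R) (xi : 'I_m -> 'I_N -> Cx R),
    [/\ (0 < m)%N, forall k, admissible Us (xi k) &
        forall x, kernel_sum s x = \sum_(k < m) theta k * cauchy_kernel (xi k) x].
Proof.
move=> v0 vs; pose s' := (0, p0) :: s.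
exists (size s'), (fun k => (nth (0, p0) s' k).1), (fun k => (nth (0, p0) s' k).2).
split=> [//|k|x].
  by have [<-|/vs] := In_seq_nth (0, p0) (ltn_ord k).
have -> : kernel_sum s x = kernel_sum s' x by rewrite /kernel_sum big_cons mul0r add0r.
by rewrite /kernel_sum (big_nth (0, p0)) big_mkord.
Qed.

Unset Implicit Arguments. Set Strict Implicit. Set Printing Implicit Defensive.

Theorem theorem2 (R : realType) (N : nat) (Ms : 'I_N -> set R)
    (Us : 'I_N -> set (Cx R)) :
  (0 < N)%N ->
  compact [set x : 'rV[R]_N | forall i, Ms i (x ord0 i)] ->
  (forall i, open (Us i)) ->
  (forall i, Us i !=set0) ->
  (forall i, connected (Us i)) ->
  (forall i z, Us i z -> Us i (conjC z)) ->
  (forall i x, Ms i x -> Us i (RtoC x)) ->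
  (forall i, boundary (closure (Us i)) !=set0) ->
  forall f : 'rV[R]_N -> R,
  {within [set x : 'rV[R]_N | forall i, Ms i (x ord0 i)], continuous f} ->
  forall eps : R, 0 < eps ->
  exists m : nat, exists theta : 'I_m -> Cx R,
  exists xi : 'I_m -> 'I_N -> Cx R,
    [/\ (0 < m)%N,
        (forall k i, boundary (closure (Us i)) (xi k i)) &
        (forall x : 'rV[R]_N, (forall i, Ms i (x ord0 i)) ->
           `| RtoC (f x) - \sum_(k < m) theta k * cauchy_kernel (xi k) x |
             < RtoC eps)].
Proof.
move=> _ cK oU _ _ sU MU Bne f fc eps eps0.
have [p pv] := admissible_exists Bne.
have [K0|K0] := pselect (exists x0 : 'rV[R]_N, forall i, Ms i (x0 ord0 i));
  last first.
  exists 1%N, (fun=> 0), (fun=> p); split; [by [] | by move=> k; exact: pv |].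
  by move=> x Kx; case: K0; exists x.
have Mcl := compact_coord_closed cK K0.
have [s vs hs] := cauchy_kernel_dense oU MU Mcl sU Bne cK fc eps0.
have [m [theta [xi [m0 vxi sE]]]] := kernel_sum_ord pv vs.
exists m, theta, xi; split; [exact: m0 | exact: vxi |].
by move=> x Kx; rewrite cnormE ltr_RtoC -sE; exact: hs.
Qed.
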